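(* For any $\eta>0$ and $\beta>0$, the expected regret of Skipper$(\beta,\mathrm{DEW}(\eta,\beta))$ (Skipper with threshold $\beta$ wrapping DEW run with learning rate $\eta$ and delay bound $d_{\max}=\beta$) against an oblivious adversary satisfies $$\bar{\mathcal R}_T\le |S_\beta|+\max\left\{\frac{\ln K}{\eta},\,4e\beta\ln K\right\}+\eta\left(\frac{KTe}{2}+D_\beta\right).$$
   Context: Setting: fix integers $K\ge 2$, $T\ge 1$, and write $[K]=\{1,\dots,K\}$. An oblivious adversary fixes in advance losses $\ell_t^a\in[0,1]$ for $t=1,2,\dots$, $a\in[K]$, and nonnegative integer delays $d_1,d_2,\dots$. In each round $t$ the learner picks (possibly at random) an action $A_t\in[K]$ and suffers loss $\ell_t^{A_t}$; at the end of round $t$ (after $A_t$ has been chosen) it observes the pairs $(s,\ell_s^{A_s})$ for all $s\le t$ with $s+d_s=t$. The expected regret is $\bar{\mathcal R}_T=\mathbb E\big[\sum_{t=1}^T\ell_t^{A_t}\big]-\min_{a\in[K]}\sum_{t=1}^T\ell_t^a$, the expectation being over the learner's randomization. Algorithm DEW (delayed exponential weights) with inputs $\eta>0$ and $d_{\max}$: set $\eta'=\min\{\eta,(4e\,d_{\max})^{-1}\}$ and $w_0^a=1$ for all $a$. For $t=1,2,\dots$: let $p_t^a=w_{t-1}^a/\sum_b w_{t-1}^b$; draw $A_t\sim p_t$ and play it; at the end of round $t$, for every received pair $(s,\ell_s^{A_s})$ form the estimates $\hat\ell_s^a=\ell_s^a\mathbb 1(a=A_s)/p_s^a$ for all $a$;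 update $w_t^a=w_{t-1}^a\exp\big(-\eta'\sum_{s}\hat\ell_s^a\big)$, the sum over pairs received at the end of round $t$. Skipper$(\beta,\mathcal A)$ with threshold $\beta>0$ and base algorithm $\mathcal A$: in every round $t$ it plays the action $A_t$ proposed by $\mathcal A$, and at the end of round $t$ it passes to $\mathcal A$ exactly those observed pairs $(s,\ell_s^{A_s})$ with $s+d_s=t$ and $d_s<\beta$. $S_\beta=\{t\in[T]: d_t\ge\beta\}$ and $D_\beta=\sum_{t\in[T]\setminus S_\beta}d_t$. *)

From Stdlib Require Import Reals List Arith.
Open Scope R_scope.

Fixpoint sumR (n : nat) (f : nat -> R) : R :=
  match n with
  | O => 0
  | S m => sumR m f + f m
  end.

Fixpoint minR (n : nat) (f : nat -> R) : R :=
  match n with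
  | O => f O
  | S m => Rmin (minR m f) (f (S m))
  end.

(* Actions are 0,...,K-1 (the paper's [K] shifted by one); rounds are 1,2,...
   loss t a = l_t^a, d t = d_t.
   A record r : list (nat * R) stores, for rounds s = 1..length r, the pair
   (A_s, p_s^{A_s}) -- exactly the information needed for the importance
   weighted estimates \hat l_s^a = l_s^a 1(a = A_s) / p_s^a. *)

(* learning rate actually used by DEW(eta, d_max) *)
Definition eta' (eta dmax : R) : R := Rmin eta (/ (4 * exp 1 * dmax)).

(* Cumulative estimated loss of action a fed to DEW by Skipper(beta, .)
   up to the end of round m = length r: sum over s <= m with s + d_s <= m
   (observed by the end of round m) and d_s < beta (not skipped). *)
Definition cum_est (loss : nat -> nat -> R) (d : nat -> nat) (beta : R)
  (r : list (nat * R)) (a : nat) : R :=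
  sumR (length r) (fun i =>
    let s := S i in
    let '(As, ps) := nth i r (O, 1) in
    if ((s + d s <=? length r)%nat && (As =? a)%nat)%bool then
      if Rlt_dec (INR (d s)) beta then loss s a / ps else 0
    else 0).

(* DEW weights w_{m}^a after m = length r rounds, and sampling distribution
   p_{m+1}^a, for Skipper(beta, DEW(eta, beta)). *)
Definition weight (loss : nat -> nat -> R) (d : nat -> nat) (eta beta : R)
  (r : list (nat * R)) (a : nat) : R :=
  exp (- eta' eta beta * cum_est loss d beta r a).

Definition prob (K : nat) (loss : nat -> nat -> R) (d : nat -> nat) (eta beta : R)
  (r : list (nat * R)) (a : nat) : R :=
  weight loss d eta beta r a / sumR K (fun b => weight loss d eta beta r b).

(* Expected loss over the next n rounds, given the record r of the
   rounds 1..length r already played (expectation over A_t ~ p_t). *)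
Fixpoint exp_loss (K : nat) (loss : nat -> nat -> R) (d : nat -> nat)
  (eta beta : R) (n : nat) (r : list (nat * R)) : R :=
  match n with
  | O => 0
  | S n' =>
      sumR K (fun a =>
        let pa := prob K loss d eta beta r a in
        pa * (loss (S (length r)) a
              + exp_loss K loss d eta beta n' (r ++ (a, pa) :: nil)))
  end.

Definition skipper_dew_regret (K T : nat) (loss : nat -> nat -> R)
  (d : nat -> nat) (eta beta : R) : R :=
  exp_loss K loss d eta beta T nil
  - minR (K - 1) (fun a => sumR T (fun i => loss (S i) a)).

Definition card_S (T : nat) (d : nat -> nat) (beta : R) : R :=
  sumR T (fun i => if Rle_dec beta (INR (d (S i))) then 1 else 0).

Definition D_beta (T : nat) (d : nat -> nat) (beta : R) : R :=
  sumR T (fun i => if Rlt_dec (INR (d (S i))) beta then INR (d (S i)) else 0).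

(* Write rho = min(eta, 1/(4 e beta)) for the learning rate of DEW, L_m(a) for the
   cumulative estimated loss of action a observed (and not skipped) by the end of
   round m, W_m = sum_a exp(-rho L_m(a)) for the potential and q_m = exp(-rho L_m)/W_m for
   the corresponding distribution; the learner plays round k+1 with q_k.

   The potential argument for exponential
   weights, performed along arrival times, bounds the estimated loss charged at
   arrival (q_{k+d_k} applied to the estimate of round k) by ln K/rho + L_M(a) plus a
   second-order term; the "drift" between q_k and q_{k+d_k} is bounded by products of
   estimates whose arrival windows overlap ([pathwise_bound]).  A stability lemma
   ([qdist_stable]) shows q_t <= e q_s (e = exp 1) whenever t - s < beta; it controls the
   diagonal second-order terms.

   Estimates are
   unbiased ([Ex_est]), each diagonal term costs at most eK/2 ([Ex_diag_term]), and
   off-diagonal pairs cost at most the indicator of overlapping windows, whose total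
   is at most D_beta ([offdiag_total]).  Skipped rounds cost at most |S_beta|, and
   1/rho <= max(1/eta, 4 e beta) yields [theorem3]. *)

From Stdlib Require Import Reals.
From Stdlib Require Import Lra Lia List Arith Bool.
From Coquelicot Require Coquelicot.
Open Scope R_scope.

Lemma sumR_ext n f g : (forall i, (i < n)%nat -> f i = g i) -> sumR n f = sumR n g.
Proof.
  induction n as [|n IH]; intros H; simpl; auto.
  rewrite IH, H; auto; intros; apply H; lia.
Qed.

Lemma sumR_plus n f g : sumR n (fun i => f i + g i) = sumR n f + sumR n g.
Proof. induction n as [|n IH]; simpl; [lra|]. rewrite IH; lra. Qed.

Lemma sumR_scal n c f : sumR n (fun i => c * f i) = c * sumR n f.
Proof. induction n as [|n IH]; simpl; [lra|]. rewrite IH; lra. Qed.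

Lemma sumR_le n f g : (forall i, (i < n)%nat -> f i <= g i) -> sumR n f <= sumR n g.
Proof.
  induction n as [|n IH]; intros H; simpl; [lra|].
  apply Rplus_le_compat; [apply IH; intros; apply H|apply H]; lia.
Qed.

Lemma sumR_const n c : sumR n (fun _ => c) = INR n * c.
Proof. induction n as [|n IH]; simpl sumR; [simpl; lra|]. rewrite IH, S_INR; lra. Qed.

Lemma sumR_zero n : sumR n (fun _ => 0) = 0.
Proof. rewrite sumR_const; lra. Qed.

Lemma sumR_nonneg n f : (forall i, (i < n)%nat -> 0 <= f i) -> 0 <= sumR n f.
Proof. intros H. rewrite <- (sumR_zero n). apply sumR_le; auto. Qed.

Lemma sumR_swap n m (f : nat -> nat -> R) :
  sumR n (fun i => sumR m (fun j => f i j)) = sumR m (fun j => sumR n (fun i => f i j)).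
Proof.
  induction n as [|n IH]; simpl.
  - symmetry; apply sumR_zero.
  - rewrite IH, <- sumR_plus. reflexivity.
Qed.

Lemma sumR_shift n f : sumR (S n) f = f O + sumR n (fun i => f (S i)).
Proof. induction n as [|n IH]; simpl in *; [lra|]. rewrite IH; lra. Qed.

Lemma sumR_add n k f : sumR (n + k) f = sumR n f + sumR k (fun i => f (n + i)%nat).
Proof.
  induction k as [|k IH]; simpl.
  - rewrite Nat.add_0_r; lra.
  - rewrite Nat.add_succ_r; simpl. rewrite IH. lra.
Qed.

Lemma sumR_telescope n f : sumR n (fun m => f (S m) - f m) = f n - f O.
Proof. induction n as [|n IH]; simpl; [lra|]. rewrite IH; lra. Qed.

Lemma sumR_delta n i c (g : nat -> R) :
  sumR n (fun u => if (c =? i + u)%nat then g (i + u)%nat else 0)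
  = if ((i <=? c) && (c <? i + n))%nat%bool then g c else 0.
Proof.
  induction n as [|n IH]; simpl.
  - destruct (i <=? c)%nat eqn:E1, (c <? i + 0)%nat eqn:E2; simpl; auto.
    apply Nat.leb_le in E1; apply Nat.ltb_lt in E2; lia.
  - rewrite IH. destruct (c =? i + n)%nat eqn:E.
    + apply Nat.eqb_eq in E; subst.
      rewrite (proj2 (Nat.leb_le i (i + n)) ltac:(lia)).
      rewrite (proj2 (Nat.ltb_ge (i + n) (i + n)) ltac:(lia)).
      rewrite (proj2 (Nat.ltb_lt (i + n) (i + S n)) ltac:(lia)). simpl; lra.
    + apply Nat.eqb_neq in E.
      destruct (i <=? c)%nat eqn:E1; simpl; [|lra].
      destruct (c <? i + n)%nat eqn:E2, (c <? i + S n)%nat eqn:E3; try lra;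
        [apply Nat.ltb_lt in E2; apply Nat.ltb_ge in E3
        |apply Nat.leb_le in E1; apply Nat.ltb_ge in E2; apply Nat.ltb_lt in E3]; lia.
Qed.

Lemma sumR_delta0 n c (g : nat -> R) :
  sumR n (fun u => if (c =? u)%nat then g u else 0) = if (c <? n)%nat then g c else 0.
Proof. exact (sumR_delta n 0 c g). Qed.

Lemma sumR_single n a (g : nat -> R) : (a < n)%nat ->
  sumR n (fun b => if (a =? b)%nat then g b else 0) = g a.
Proof. intros H. rewrite sumR_delta0, (proj2 (Nat.ltb_lt a n) H). reflexivity. Qed.

Ltac bool2prop := repeat match goal with
 | H : (_ <=? _)%nat = true |- _ => apply Nat.leb_le in H
 | H : (_ <=? _)%nat = false |- _ => apply Nat.leb_gt in H
 | H : (_ <? _)%nat = true |- _ => apply Nat.ltb_lt in H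
 | H : (_ <? _)%nat = false |- _ => apply Nat.ltb_ge in H
 | H : (_ =? _)%nat = true |- _ => apply Nat.eqb_eq in H
 | H : (_ =? _)%nat = false |- _ => apply Nat.eqb_neq in H
 | H : (_ && _)%bool = true |- _ => apply andb_true_iff in H; destruct H
 | H : (_ && _)%bool = false |- _ => apply andb_false_iff in H; destruct H
 end.

Lemma count_interval n t a0 :
  sumR n (fun k => if Rlt_dec a0 (INR k) then (if (k <? t)%nat then 1 else 0) else 0)
  <= Rmax 0 (INR (Nat.min n t) - a0).
Proof.
  induction n as [|n IH]; simpl sumR.
  - simpl. apply Rmax_l.
  - assert (Hmono : Rmax 0 (INR (Nat.min n t) - a0) <= Rmax 0 (INR (Nat.min (S n) t) - a0)).
    { apply Rle_max_compat_l, Rplus_le_compat_r, le_INR; lia. }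
    destruct (Rlt_dec a0 (INR n)) as [H1|H1]; destruct (n <? t)%nat eqn:H2; try lra.
    apply Nat.ltb_lt in H2. replace (Nat.min (S n) t) with (S n) in * by lia.
    replace (Nat.min n t) with n in IH by lia. rewrite S_INR in *.
    rewrite Rmax_right in IH by lra. rewrite Rmax_right by lra. lra.
Qed.

Lemma count_window n k dl :
  sumR n (fun j => if ((k <? j) && (j <=? k + dl))%nat%bool then 1 else 0) <= INR dl.
Proof.
  assert (H : sumR n (fun j => if ((k <? j) && (j <=? k + dl))%nat%bool then 1 else 0)
              <= INR (Nat.min dl (n - S k))).
  { induction n as [|n IH]; simpl sumR.
    - replace (Nat.min dl (0 - S k)) with O by lia. simpl; lra.
    - assert (INR (Nat.min dl (n - S k)) <= INR (Nat.min dl (S n - S k)))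
        by (apply le_INR; lia).
      destruct ((k <? n) && (n <=? k + dl))%nat%bool eqn:E; bool2prop; try lra.
      replace (Nat.min dl (S n - S k)) with (S (Nat.min dl (n - S k))) by lia.
      rewrite S_INR; lra. }
  eapply Rle_trans; [apply H|apply le_INR; lia].
Qed.

Lemma exp_le x y : x <= y -> exp x <= exp y.
Proof. intros [H|H]; [left; apply exp_increasing; auto|subst; lra]. Qed.

Lemma ln_le x y : 0 < x -> x <= y -> ln x <= ln y.
Proof. intros Hx [H|H]; [left; apply ln_increasing; auto|subst; lra]. Qed.

Lemma ln_le_sub1 x : 0 < x -> ln x <= x - 1.
Proof. intros H. pose proof (exp_ineq1_le (ln x)). rewrite exp_ln in H0; lra. Qed.

Module ExpQuadratic.
Import Coquelicot.Coquelicot.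
Lemma exp_neg_quadratic x : 0 <= x -> exp (- x) <= 1 - x + x * x / 2.
Proof.
  intros Hx. set (g := fun y => exp (- y) - 1 + y - y * y / 2).
  destruct (MVT_gen g 0 x (fun y => - exp (- y) + 1 - y)) as [c [Hc Hd]].
  - intros y _. unfold g. auto_derive; auto. field.
  - intros y _. apply continuity_pt_filterlim.
    apply (ex_derive_continuous (K:=R_AbsRing) (V:=R_NormedModule)).
    unfold g. auto_derive; auto.
  - rewrite Rmin_left in Hc by lra. rewrite Rmax_right in Hc by lra.
    unfold g in Hd. rewrite Ropp_0, exp_0 in Hd.
    pose proof (exp_ineq1_le (- c)). nra.
Qed.
End ExpQuadratic.
Import ExpQuadratic.

Lemma exp_neg_twice_le x : 0 <= x <= / 2 -> exp (- (2 * x)) <= 1 - x.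
Proof.
  intros Hx. pose proof (exp_ineq1_le (2 * x)). pose proof (exp_pos (2 * x)).
  rewrite exp_Ropp. apply Rmult_le_reg_l with (exp (2 * x)); auto.
  rewrite Rinv_r by lra. nra.
Qed.

(** * The algorithm along a history *)

Section SkipperDEW.
Variables (K T : nat) (loss : nat -> nat -> R) (d : nat -> nat) (eta beta : R).
Hypothesis hK : (2 <= K)%nat.
Hypothesis hloss : forall t a, (1 <= t)%nat -> (a < K)%nat -> 0 <= loss t a <= 1.
Hypothesis heta : 0 < eta.
Hypothesis hbeta : 0 < beta.

(* A history lists, for rounds 1, 2, ..., the action played and its probability;
   index i of a history refers to round i + 1. *)
Definition history := list (nat * R).
Definition played (r : history) i := fst (nth i r (O, 1)).
Definition played_prob (r : history) i := snd (nth i r (O, 1)).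

Definition rate := eta' eta beta.
Definition pr := prob K loss d eta beta.

(* kept i = 1 iff round i + 1 is not skipped by Skipper. *)
Definition kept i := if Rlt_dec (INR (d (S i))) beta then 1 else 0.

Definition est_of i a (x : nat * R) :=
  if (fst x =? a)%nat
  then (if Rlt_dec (INR (d (S i))) beta then loss (S i) a / snd x else 0) else 0.
Definition est (r : history) i a := est_of i a (nth i r (O, 1)).

Definition cumL (r : history) m a :=
  sumR (length r) (fun i => if (S i + d (S i) <=? m)%nat then est r i a else 0).
Definition potential r m := sumR K (fun b => exp (- rate * cumL r m b)).
Definition qdist r m a := exp (- rate * cumL r m a) / potential r m.

Lemma rate_pos : 0 < rate.
Proof.
  unfold rate, eta'. apply Rmin_pos; auto. apply Rinv_0_lt_compat.
  pose proof (exp_pos 1); nra.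
Qed.

Lemma rate_le_eta : rate <= eta.
Proof. unfold rate, eta'; apply Rmin_l. Qed.

Lemma rate_beta : rate * (4 * exp 1 * beta) <= 1.
Proof.
  unfold rate, eta'. pose proof (exp_pos 1).
  apply Rle_trans with (/ (4 * exp 1 * beta) * (4 * exp 1 * beta)).
  - apply Rmult_le_compat_r; [nra|apply Rmin_r].
  - rewrite Rinv_l; [lra|nra].
Qed.

Lemma kept_01 k : 0 <= kept k <= 1.
Proof. unfold kept; destruct (Rlt_dec _ _); lra. Qed.

Lemma potential_pos r m : 0 < potential r m.
Proof.
  unfold potential. destruct K as [|K']; [lia|]. simpl.
  pose proof (exp_pos (- rate * cumL r m K')).
  pose proof (sumR_nonneg K' (fun b => exp (- rate * cumL r m b))
                (fun i _ => Rlt_le _ _ (exp_pos _))).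
  lra.
Qed.

Lemma qdist_pos r m a : 0 < qdist r m a.
Proof. apply Rdiv_lt_0_compat; [apply exp_pos|apply potential_pos]. Qed.

Lemma qdist_sum r m : sumR K (fun a => qdist r m a) = 1.
Proof.
  unfold qdist, Rdiv.
  rewrite (sumR_ext _ _ (fun a => / potential r m * exp (- rate * cumL r m a)))
    by (intros; lra).
  rewrite sumR_scal. fold (potential r m). field. apply Rgt_not_eq, potential_pos.
Qed.

Lemma pr_qdist r a : pr r a = qdist r (length r) a.
Proof.
  assert (Hcum : forall b, cum_est loss d beta r b = cumL r (length r) b).
  { intros b. apply sumR_ext; intros i _. unfold est, est_of.
    destruct (nth i r (O, 1)) as [As ps]. cbn [fst snd].
    destruct (S i + d (S i) <=? length r)%nat, (As =? b)%nat; reflexivity. }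
  unfold pr, prob, weight, qdist, potential. rewrite Hcum. f_equal.
  apply sumR_ext; intros; rewrite Hcum; reflexivity.
Qed.

Lemma pr_sum r : sumR K (fun a => pr r a) = 1.
Proof. rewrite <- (qdist_sum r (length r)). apply sumR_ext; intros; apply pr_qdist. Qed.

Lemma pr_pos r a : 0 < pr r a.
Proof. rewrite pr_qdist; apply qdist_pos. Qed.

(** ** Locality of q_m *)

Lemma cumL_app r t m a : (m <= length r)%nat -> cumL (r ++ t) m a = cumL r m a.
Proof.
  intros H. unfold cumL. rewrite length_app, sumR_add.
  rewrite (sumR_ext (length t) _ (fun _ => 0)), sumR_zero, Rplus_0_r.
  - apply sumR_ext; intros i Hi. unfold est. rewrite app_nth1; auto.
  - intros i Hi. rewrite (proj2 (Nat.leb_gt _ m)); auto; lia.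
Qed.

Lemma qdist_app r t m a : (m <= length r)%nat -> qdist (r ++ t) m a = qdist r m a.
Proof.
  intros H. unfold qdist, potential. rewrite cumL_app; auto. f_equal.
  apply sumR_ext; intros; rewrite cumL_app; auto.
Qed.

Definition agree_except j (r1 r2 : history) :=
  length r1 = length r2 /\ forall k, k <> j -> nth k r1 (O, 1) = nth k r2 (O, 1).

Lemma cumL_agree j r1 r2 m a : agree_except j r1 r2 -> (m < S j + d (S j))%nat ->
  cumL r1 m a = cumL r2 m a.
Proof.
  intros [Hl Hn] Hm. unfold cumL. rewrite Hl.
  apply sumR_ext; intros i Hi. destruct (Nat.eq_dec i j) as [->|Hij].
  - rewrite (proj2 (Nat.leb_gt _ m)); auto; lia.
  - unfold est. rewrite Hn; auto.
Qed.

Lemma qdist_agree j r1 r2 m a : agree_except j r1 r2 -> (m < S j + d (S j))%nat ->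
  qdist r1 m a = qdist r2 m a.
Proof.
  intros HR Hm. unfold qdist, potential. rewrite (cumL_agree j r1 r2); auto.
  f_equal. apply sumR_ext; intros; erewrite cumL_agree; eauto.
Qed.

Lemma pr_agree j r1 r2 a : agree_except j r1 r2 -> (length r1 < S j + d (S j))%nat ->
  pr r1 a = pr r2 a.
Proof.
  intros HR Hl. rewrite !pr_qdist, <- (proj1 HR). apply (qdist_agree j); auto.
Qed.

Lemma agree_except_app j r1 r2 x :
  agree_except j r1 r2 -> agree_except j (r1 ++ x :: nil) (r2 ++ x :: nil).
Proof.
  intros [Hl Hn]. split; [rewrite !length_app, Hl; auto|].
  intros k Hk. destruct (Nat.lt_ge_cases k (length r1)).
  - rewrite !app_nth1; auto. lia.
  - rewrite !app_nth2; try lia. rewrite Hl; auto.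
Qed.

(** * Expectation over the learner's randomisation *)

Fixpoint Ex (n : nat) (F : history -> R) (r : history) : R :=
  match n with
  | O => F r
  | S n' => sumR K (fun b => pr r b * Ex n' F (r ++ (b, pr r b) :: nil))
  end.

(* The extensions t of r that have positive probability. *)
Fixpoint consistent (r t : history) : Prop :=
  match t with
  | nil => True
  | x :: t' => (fst x < K)%nat /\ snd x = pr r (fst x) /\ consistent (r ++ x :: nil) t'
  end.

Lemma Ex_ext n : forall r F G, (forall t, length t = n -> F (r ++ t) = G (r ++ t)) ->
  Ex n F r = Ex n G r.
Proof.
  induction n as [|n IH]; intros r F G H; simpl.
  - specialize (H nil eq_refl). rewrite !app_nil_r in H; auto.
  - apply sumR_ext; intros b _. f_equal. apply IH. intros t Ht.
    rewrite <- !app_assoc. apply H. simpl; auto.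
Qed.

Lemma Ex_mono n : forall r F G,
  (forall t, length t = n -> consistent r t -> F (r ++ t) <= G (r ++ t)) ->
  Ex n F r <= Ex n G r.
Proof.
  induction n as [|n IH]; intros r F G H; simpl.
  - specialize (H nil eq_refl I). rewrite !app_nil_r in H; auto.
  - apply sumR_le; intros b Hb. apply Rmult_le_compat_l; [apply Rlt_le, pr_pos|].
    apply IH. intros t Ht Hv. rewrite <- !app_assoc. apply H; simpl; auto.
Qed.

Lemma Ex_plus n : forall r F G, Ex n (fun x => F x + G x) r = Ex n F r + Ex n G r.
Proof.
  induction n as [|n IH]; intros; simpl; auto.
  rewrite <- sumR_plus. apply sumR_ext; intros. rewrite IH; lra.
Qed.

Lemma Ex_scal n : forall r c F, Ex n (fun x => c * F x) r = c * Ex n F r.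
Proof.
  induction n as [|n IH]; intros; simpl; auto.
  rewrite <- sumR_scal. apply sumR_ext; intros. rewrite IH; lra.
Qed.

Lemma Ex_const n : forall r c, Ex n (fun _ => c) r = c.
Proof.
  induction n as [|n IH]; intros; simpl; auto.
  rewrite (sumR_ext _ _ (fun b => c * pr r b)) by (intros; rewrite IH; lra).
  rewrite sumR_scal, pr_sum; lra.
Qed.

Lemma Ex_sum n r m (F : nat -> history -> R) :
  Ex n (fun x => sumR m (fun j => F j x)) r = sumR m (fun j => Ex n (F j) r).
Proof.
  induction m as [|m IH]; simpl; [apply Ex_const|].
  rewrite Ex_plus, IH; auto.
Qed.

Lemma Ex_nonneg n : forall r F, (forall x, 0 <= F x) -> 0 <= Ex n F r.
Proof.
  induction n as [|n IH]; intros; simpl; auto. apply sumR_nonneg; intros.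
  apply Rmult_le_pos; [apply Rlt_le, pr_pos|apply IH; auto].
Qed.

Lemma Ex_split n1 : forall n2 r F, Ex (n1 + n2) F r = Ex n1 (fun r' => Ex n2 F r') r.
Proof. induction n1 as [|n1 IH]; intros; simpl; auto. apply sumR_ext; intros; rewrite IH; auto. Qed.

Lemma Ex_prefix n r F : (forall t, length t = n -> F (r ++ t) = F r) -> Ex n F r = F r.
Proof. intros H. rewrite (Ex_ext n r F (fun _ => F r)) by auto. apply Ex_const. Qed.

(* The record of round j does not influence play before its feedback arrives. *)
Lemma Ex_agree j n : forall r1 r2 H, agree_except j r1 r2 ->
  (forall s1 s2, agree_except j s1 s2 -> H s1 = H s2) ->
  (length r1 + n <= S j + d (S j))%nat -> Ex n H r1 = Ex n H r2.
Proof.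
  induction n as [|n IH]; intros r1 r2 H HR HH Hl; simpl; auto.
  apply sumR_ext; intros b _. rewrite (pr_agree j r1 r2 b HR) by lia.
  f_equal. apply IH; auto. apply agree_except_app; auto. rewrite length_app; simpl; lia.
Qed.

(* Integrating out the next round, whose record enters only through f, when the
   rest H of the integrand does not depend on that record. *)
Lemma Ex_step n r (f : nat * R -> R) H z :
  (forall x, Ex n H (r ++ x :: nil) = Ex n H (r ++ z :: nil)) ->
  Ex (S n) (fun r' => f (nth (length r) r' (O, 1)) * H r') r
  = sumR K (fun b => pr r b * f (b, pr r b)) * Ex n H (r ++ z :: nil).
Proof.
  intros Hinv. simpl. rewrite Rmult_comm, <- sumR_scal. apply sumR_ext; intros b _.
  rewrite (Ex_ext n _ _ (fun r' => f (b, pr r b) * H r')).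
  - rewrite Ex_scal, Hinv; lra.
  - intros t _. rewrite <- app_assoc, app_nth2, Nat.sub_diag; auto.
Qed.

Lemma Ex_step_agree j n r (f : nat * R -> R) H z :
  length r = j -> (forall s1 s2, agree_except j s1 s2 -> H s1 = H s2) ->
  (n <= d (S j))%nat ->
  Ex (S n) (fun r' => f (nth j r' (O, 1)) * H r') r
  = sumR K (fun b => pr r b * f (b, pr r b)) * Ex n H (r ++ z :: nil).
Proof.
  intros Hl HH Hn. subst j. apply Ex_step. intros x. apply (Ex_agree (length r)); auto.
  - split; [rewrite !length_app; auto|]. intros k Hk.
    destruct (Nat.lt_ge_cases k (length r)); [rewrite !app_nth1; auto|].
    rewrite !app_nth2; auto. destruct (k - length r)%nat as [|[|u]] eqn:E; simpl; auto. lia.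
  - rewrite length_app; simpl; lia.
Qed.

Lemma consistent_record t : forall r, consistent r t ->
  forall i, (length r <= i < length r + length t)%nat ->
  (played (r ++ t) i < K)%nat /\ played_prob (r ++ t) i = qdist (r ++ t) i (played (r ++ t) i).
Proof.
  induction t as [|x t IH]; intros r Hv i Hi; simpl in *; [lia|].
  destruct Hv as [H1 [H2 H3]].
  destruct (Nat.eq_dec i (length r)) as [->|Hne].
  - unfold played, played_prob. rewrite app_nth2, Nat.sub_diag by lia. simpl.
    split; auto. rewrite H2, pr_qdist, (qdist_app r (x :: t)); auto.
  - replace (r ++ x :: t) with ((r ++ x :: nil) ++ t) by (rewrite <- app_assoc; auto).
    apply IH; auto. rewrite length_app; simpl; lia.
Qed.

Lemma exp_loss_Ex n : forall r, exp_loss K loss d eta beta n r =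
  Ex n (fun r' => sumR n (fun k => loss (S (length r + k)) (played r' (length r + k)))) r.
Proof.
  induction n as [|n IH]; intros r; simpl; auto.
  apply sumR_ext; intros b _. fold (pr r b). f_equal.
  set (r1 := r ++ (b, pr r b) :: nil).
  rewrite (Ex_ext n _ _ (fun r' => loss (S (length r)) b +
     sumR n (fun k => loss (S (length r1 + k)) (played r' (length r1 + k))))).
  - rewrite Ex_plus, Ex_const, IH; auto.
  - intros t _.
    set (f := fun k => loss (S (length r + k)) (played (r1 ++ t) (length r + k))).
    assert (E := sumR_shift n f). cbn [sumR] in E.
    etransitivity; [exact E|]. unfold f. f_equal.
    + rewrite Nat.add_0_r. unfold played, r1. rewrite <- app_assoc, app_nth2, Nat.sub_diag; auto.
    + apply sumR_ext; intros k _. unfold r1. rewrite length_app; simpl.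
      replace (length r + S k)%nat with (length r + 1 + k)%nat by lia. auto.
Qed.

(** * Pathwise analysis *)

(* Round j + 1's feedback arrives while round k + 1's is pending (the arrival
   windows overlap), or both arrive at the same time. *)
Definition pending k j := ((k <=? j + d (S j)) && (j + d (S j) <? k + d (S k)))%nat%bool.
Definition same_arrival k j := (k + d (S k) =? j + d (S j))%nat.
Definition pair_coef k j :=
  (if pending k j then 1 else 0) + (if same_arrival k j then / 2 else 0).

Definition arrival (r : history) m b :=
  sumR T (fun k => if (S k + d (S k) =? m)%nat then est r k b else 0).

Definition kept_arrivals s u := sumR T (fun k =>
  kept k * (if ((s <=? k + d (S k)) && (k + d (S k) <? u))%nat%bool then 1 else 0)).
Definition kept_arrivals_at u := sumR T (fun k =>
  kept k * (if (k + d (S k) =? u)%nat then 1 else 0)).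

Lemma kept_arrivals_refl s : kept_arrivals s s = 0.
Proof.
  unfold kept_arrivals. rewrite (sumR_ext _ _ (fun _ => 0)); [apply sumR_zero|].
  intros k _. destruct (s <=? k + d (S k))%nat eqn:E1, (k + d (S k) <? s)%nat eqn:E2;
    simpl; bool2prop; try lra; lia.
Qed.

Lemma kept_arrivals_S s u : (s <= u)%nat ->
  kept_arrivals s (S u) = kept_arrivals s u + kept_arrivals_at u.
Proof.
  intros H. unfold kept_arrivals, kept_arrivals_at. rewrite <- sumR_plus.
  apply sumR_ext; intros k _.
  destruct (s <=? k + d (S k))%nat eqn:E1, (k + d (S k) <? S u)%nat eqn:E2,
    (k + d (S k) <? u)%nat eqn:E3, (k + d (S k) =? u)%nat eqn:E4;
    simpl; bool2prop; try lra; lia.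
Qed.

Lemma kept_arrivals_at_nonneg u : 0 <= kept_arrivals_at u.
Proof.
  apply sumR_nonneg; intros k _. pose proof (kept_01 k).
  destruct (_ =? _)%nat; lra.
Qed.

Lemma kept_arrivals_nonneg s u : 0 <= kept_arrivals s u.
Proof.
  apply sumR_nonneg; intros k _. pose proof (kept_01 k).
  destruct (_ && _)%bool; lra.
Qed.

Lemma kept_arrivals_at_le s u t : (s <= u)%nat -> (u < t)%nat ->
  kept_arrivals_at u <= kept_arrivals s t.
Proof.
  intros H1 H2. apply sumR_le; intros k _. pose proof (kept_01 k).
  destruct (k + d (S k) =? u)%nat eqn:E; [|destruct (_ && _)%bool; lra].
  apply Nat.eqb_eq in E.
  rewrite (proj2 (andb_true_iff _ _)); [lra|].
  split; [apply Nat.leb_le|apply Nat.ltb_lt]; lia.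
Qed.

(* A kept round arriving at or after s was played after s - beta, so at most
   t - s + beta kept rounds arrive during s+1, ..., t. *)
Lemma kept_arrivals_bound s t : (s <= t)%nat -> kept_arrivals s t <= INR t - INR s + beta.
Proof.
  intros Hst. eapply Rle_trans.
  - apply (sumR_le T _ (fun k => if Rlt_dec (INR s - beta) (INR k)
                                 then (if (k <? t)%nat then 1 else 0) else 0)).
    intros k _. unfold kept.
    assert (H01 : 0 <= (if Rlt_dec (INR s - beta) (INR k)
                        then (if (k <? t)%nat then 1 else 0) else 0))
      by (destruct (Rlt_dec _ _); [destruct (k <? t)%nat|]; lra).
    destruct (Rlt_dec (INR (d (S k))) beta) as [Hd|Hd]; [|lra].
    rewrite Rmult_1_l.
    destruct ((s <=? k + d (S k)) && (k + d (S k) <? t))%nat%bool eqn:E; [|lra].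
    bool2prop. apply le_INR in H. rewrite plus_INR in H.
    destruct (Rlt_dec (INR s - beta) (INR k)) as [H'|H']; [|lra].
    rewrite (proj2 (Nat.ltb_lt k t)) by lia. lra.
  - eapply Rle_trans; [apply count_interval|]. apply Rmax_lub.
    + apply le_INR in Hst; lra.
    + assert (INR (Nat.min T t) <= INR t) by (apply le_INR; lia). lra.
Qed.

Section Pathwise.
Variable r : history.
Hypothesis hlen : length r = T.
Hypothesis hrec : forall i, (i < T)%nat ->
  (played r i < K)%nat /\ played_prob r i = qdist r i (played r i).

Lemma played_prob_pos i : (i < T)%nat -> 0 < played_prob r i.
Proof. intros Hi. rewrite (proj2 (hrec i Hi)). apply qdist_pos. Qed.

Lemma est_nonneg i b : (i < T)%nat -> 0 <= est r i b.
Proof.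
  intros Hi. unfold est, est_of. destruct (fst (nth i r (O, 1%R)) =? b)%nat eqn:E; [|lra].
  apply Nat.eqb_eq in E. destruct (Rlt_dec _ _); [|lra].
  apply Rmult_le_pos; [|apply Rlt_le, Rinv_0_lt_compat, played_prob_pos; auto].
  apply hloss; [lia|]. rewrite <- E; apply hrec; auto.
Qed.

Lemma arrival_nonneg m b : 0 <= arrival r m b.
Proof.
  apply sumR_nonneg; intros k Hk. destruct (_ =? _)%nat; [apply est_nonneg; auto|lra].
Qed.

Lemma cumL_S m b : cumL r (S m) b = cumL r m b + arrival r (S m) b.
Proof.
  unfold cumL, arrival. rewrite hlen, <- sumR_plus. apply sumR_ext; intros k _.
  destruct (S k + d (S k) <=? S m)%nat eqn:E1, (S k + d (S k) <=? m)%nat eqn:E2,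
    (S k + d (S k) =? S m)%nat eqn:E3; bool2prop; try lra; lia.
Qed.

Lemma cumL_0 b : cumL r 0 b = 0.
Proof. unfold cumL. rewrite (sumR_ext _ _ (fun _ => 0)) by auto. apply sumR_zero. Qed.

Lemma cumL_mono m u b : cumL r m b <= cumL r (m + u) b.
Proof.
  induction u as [|u IH]; [rewrite Nat.add_0_r; lra|].
  rewrite Nat.add_succ_r, cumL_S. pose proof (arrival_nonneg (S (m + u)) b); lra.
Qed.

Lemma potential_S m : potential r (S m)
  = potential r m * sumR K (fun b => qdist r m b * exp (- rate * arrival r (S m) b)).
Proof.
  unfold potential at 1. rewrite <- sumR_scal. apply sumR_ext; intros b _.
  rewrite cumL_S. unfold qdist. rewrite Rmult_plus_distr_l, exp_plus.
  field. apply Rgt_not_eq, potential_pos.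
Qed.

Lemma potential_S_le m : potential r (S m) <= potential r m.
Proof.
  apply sumR_le; intros b _. rewrite cumL_S. apply exp_le.
  pose proof (arrival_nonneg (S m) b); pose proof rate_pos; nra.
Qed.

Lemma log_potential_step m : ln (potential r (S m)) - ln (potential r m) <=
  - rate * sumR K (fun b => qdist r m b * arrival r (S m) b)
  + rate * rate / 2 * sumR K (fun b => qdist r m b * (arrival r (S m) b * arrival r (S m) b)).
Proof.
  pose proof (potential_pos r (S m)) as H1. rewrite potential_S in H1 |- *.
  set (S0 := sumR K (fun b => qdist r m b * exp (- rate * arrival r (S m) b))) in *.
  assert (HS : 0 < S0) by (pose proof (potential_pos r m); nra).
  rewrite ln_mult; [|apply potential_pos|auto].
  apply Rle_trans with (S0 - 1); [pose proof (ln_le_sub1 S0 HS); lra|].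
  unfold S0. rewrite <- (qdist_sum r m), <- !sumR_scal, <- sumR_plus.
  rewrite (Rminus_def _ (sumR K _)), <- (Rmult_1_l (sumR K (fun a => qdist r m a))).
  rewrite Ropp_mult_distr_l, <- sumR_scal, <- sumR_plus. apply sumR_le; intros b _.
  pose proof (qdist_pos r m b). pose proof rate_pos. pose proof (arrival_nonneg (S m) b).
  pose proof (exp_neg_quadratic (rate * arrival r (S m) b) ltac:(nra)).
  replace (- rate * arrival r (S m) b) with (- (rate * arrival r (S m) b)) by ring. nra.
Qed.

Lemma qdist_lower m b : qdist r m b * (1 - rate * arrival r (S m) b) <= qdist r (S m) b.
Proof.
  unfold qdist. rewrite cumL_S, Rmult_plus_distr_l, exp_plus.
  pose proof (potential_S_le m). pose proof (potential_pos r (S m)).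
  pose proof (potential_pos r m). pose proof (exp_pos (- rate * cumL r m b)).
  pose proof (exp_ineq1_le (- rate * arrival r (S m) b)).
  assert (0 < / potential r m <= / potential r (S m))
    by (split; [apply Rinv_0_lt_compat; auto|apply Rinv_le_contravar; auto]).
  pose proof (exp_pos (- rate * arrival r (S m) b)).
  unfold Rdiv. set (a := exp (- rate * cumL r m b)) in *.
  set (y := exp (- rate * arrival r (S m) b)) in *.
  set (i1 := / potential r m) in *. set (i2 := / potential r (S m)) in *.
  assert (a * i1 <= a * i2) by (apply Rmult_le_compat_l; lra).
  assert (0 < a * i1) by (apply Rmult_lt_0_compat; lra).
  destruct (Rle_or_lt (1 - rate * arrival r (S m) b) 0); nra.
Qed.

Definition charged k m := sumR K (fun b => qdist r m b * est r k b).
Definition cross k j := sumR K (fun b => qdist r (j + d (S j)) b * est r k b * est r j b).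

Lemma charged_formula k m : (k < T)%nat ->
  charged k m = kept k * (qdist r m (played r k) * loss (S k) (played r k) / played_prob r k).
Proof.
  intros Hk. destruct (hrec k Hk) as [HA HP]. unfold charged, est, est_of.
  rewrite (sumR_ext _ _ (fun b => if (played r k =? b)%nat then qdist r m b *
     (if Rlt_dec (INR (d (S k))) beta then loss (S k) b / played_prob r k else 0) else 0)).
  - rewrite sumR_single; auto. pose proof (played_prob_pos k Hk).
    unfold kept. destruct (Rlt_dec _ _); field; lra.
  - intros b _. unfold played, played_prob. destruct (fst (nth k r (O, 1%R)) =? b)%nat; lra.
Qed.

Lemma charged_self k : (k < T)%nat -> charged k k = kept k * loss (S k) (played r k).
Proof.
  intros Hk. rewrite charged_formula; auto. rewrite <- (proj2 (hrec k Hk)).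
  pose proof (played_prob_pos k Hk). field. lra.
Qed.

Lemma arrival_weighted_sum (h : nat -> R) m : sumR K (fun b => h b * arrival r (S m) b) =
  sumR T (fun j => if (j + d (S j) =? m)%nat then sumR K (fun b => h b * est r j b) else 0).
Proof.
  unfold arrival. rewrite (sumR_ext K _ (fun b => sumR T (fun j => h b *
     (if (j + d (S j) =? m)%nat then est r j b else 0)))).
  - rewrite sumR_swap. apply sumR_ext; intros j _. destruct (j + d (S j) =? m)%nat; auto.
    rewrite (sumR_ext K _ (fun _ => 0)) by (intros; ring). apply sumR_zero.
  - intros b _. rewrite <- sumR_scal. reflexivity.
Qed.

Section Horizon.
Variable M : nat.
Hypothesis hM : forall k, (k < T)%nat -> (k + d (S k) < M)%nat.

Lemma first_order_total :
  sumR M (fun m => sumR K (fun b => qdist r m b * arrival r (S m) b))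
  = sumR T (fun k => charged k (k + d (S k))).
Proof.
  rewrite (sumR_ext M _ (fun m => sumR T (fun k =>
     if (k + d (S k) =? m)%nat then charged k m else 0)))
    by (intros m _; apply arrival_weighted_sum).
  rewrite sumR_swap. apply sumR_ext; intros k Hk.
  rewrite sumR_delta0, (proj2 (Nat.ltb_lt _ M)); auto.
Qed.

Lemma second_order_total :
  sumR M (fun m => sumR K (fun b => qdist r m b * (arrival r (S m) b * arrival r (S m) b)))
  = sumR T (fun k => sumR T (fun j => if same_arrival k j then cross k j else 0)).
Proof.
  unfold same_arrival. rewrite (sumR_swap T T).
  rewrite (sumR_ext M _ (fun m => sumR T (fun j => sumR T (fun k =>
     if (j + d (S j) =? m)%nat then (if (k + d (S k) =? m)%nat then
        sumR K (fun b => qdist r m b * est r k b * est r j b) else 0) else 0)))).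
  - rewrite sumR_swap. apply sumR_ext; intros j Hj. rewrite sumR_swap.
    apply sumR_ext; intros k _.
    rewrite (sumR_delta0 M (j + d (S j)) (fun m => if (k + d (S k) =? m)%nat then
        sumR K (fun b => qdist r m b * est r k b * est r j b) else 0)).
    rewrite (proj2 (Nat.ltb_lt _ M)); auto.
  - intros m _.
    rewrite (sumR_ext K _ (fun b => (qdist r m b * arrival r (S m) b) * arrival r (S m) b))
      by (intros; ring).
    rewrite arrival_weighted_sum. apply sumR_ext; intros j _.
    destruct (j + d (S j) =? m)%nat; [|symmetry; apply sumR_zero].
    rewrite (sumR_ext K _ (fun b => (qdist r m b * est r j b) * arrival r (S m) b))
      by (intros; ring).
    rewrite arrival_weighted_sum. apply sumR_ext; intros k _.
    destruct (k + d (S k) =? m)%nat; auto. apply sumR_ext; intros; ring.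
Qed.

Lemma log_potential_final a : (a < K)%nat -> - rate * cumL r M a <= ln (potential r M).
Proof.
  intros Ha. rewrite <- (ln_exp (- rate * cumL r M a)).
  apply ln_le; [apply exp_pos|]. unfold potential.
  rewrite <- (sumR_single K a (fun b => exp (- rate * cumL r M b))) by auto.
  apply sumR_le; intros b _. destruct (a =? b)%nat; [lra|apply Rlt_le, exp_pos].
Qed.

Lemma potential_bound a : (a < K)%nat ->
  sumR T (fun k => charged k (k + d (S k)))
  <= ln (INR K) / rate + cumL r M a
     + rate / 2 * sumR T (fun k => sumR T (fun j => if same_arrival k j then cross k j else 0)).
Proof.
  intros Ha. pose proof rate_pos as He.
  assert (Hpot : ln (potential r M) - ln (potential r 0) <=
     - rate * sumR M (fun m => sumR K (fun b => qdist r m b * arrival r (S m) b))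
     + rate * rate / 2 * sumR M (fun m =>
         sumR K (fun b => qdist r m b * (arrival r (S m) b * arrival r (S m) b)))).
  { rewrite <- (sumR_telescope M (fun m => ln (potential r m))), <- !sumR_scal, <- sumR_plus.
    apply sumR_le; intros m _. apply log_potential_step. }
  assert (HW0 : potential r 0 = INR K).
  { unfold potential. rewrite (sumR_ext _ _ (fun _ => 1)).
    - rewrite sumR_const; lra.
    - intros; rewrite cumL_0, Rmult_0_r, exp_0; auto. }
  rewrite first_order_total, second_order_total, HW0 in Hpot.
  pose proof (log_potential_final a Ha).
  apply Rmult_le_reg_l with rate; auto. unfold Rdiv. field_simplify; [|lra]. nra.
Qed.

End Horizon.

(* Drift: while round k+1's feedback is pending, q moves away from q_k only through
   the estimates arriving in between. *)
Lemma drift k : (k < T)%nat ->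
  charged k k - charged k (k + d (S k))
  <= rate * sumR T (fun j => if pending k j then cross k j else 0).
Proof.
  intros Hk.
  assert (Htel : charged k k - charged k (k + d (S k))
     = sumR (d (S k)) (fun u => charged k (k + u) - charged k (S (k + u)))).
  { pose proof (sumR_telescope (d (S k)) (fun u => - charged k (k + u))) as E.
    cbv beta in E. rewrite Nat.add_0_r in E.
    rewrite <- (sumR_ext _ (fun u => - charged k (k + S u) - - charged k (k + u))); [lra|].
    intros u _. rewrite Nat.add_succ_r; lra. }
  rewrite Htel.
  apply Rle_trans with (sumR (d (S k)) (fun u => rate * sumR K (fun b =>
     (qdist r (k + u) b * est r k b) * arrival r (S (k + u)) b))).
  - apply sumR_le; intros u _. unfold charged.
    rewrite Rminus_def, <- (Rmult_1_l (sumR K (fun b => qdist r (S (k + u)) b * est r k b))).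
    rewrite Ropp_mult_distr_l, <- !sumR_scal, <- sumR_plus.
    apply sumR_le; intros b _. pose proof (qdist_lower (k + u) b).
    pose proof (est_nonneg k b Hk). nra.
  - rewrite sumR_scal. apply Rmult_le_compat_l; [apply Rlt_le, rate_pos|]. right.
    rewrite (sumR_ext _ _ (fun u => sumR T (fun j => if (j + d (S j) =? k + u)%nat
        then sumR K (fun b => qdist r (k + u) b * est r k b * est r j b) else 0)))
      by (intros u _; apply arrival_weighted_sum).
    rewrite sumR_swap. apply sumR_ext; intros j _.
    rewrite (sumR_delta (d (S k)) k (j + d (S j))
      (fun m => sumR K (fun b => qdist r m b * est r k b * est r j b))).
    reflexivity.
Qed.

Lemma pathwise_bound M a : (forall k, (k < T)%nat -> (k + d (S k) < M)%nat) -> (a < K)%nat ->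
  sumR T (fun k => kept k * loss (S k) (played r k))
  <= ln (INR K) / rate + cumL r M a
     + rate * sumR T (fun k => sumR T (fun j => pair_coef k j * cross k j)).
Proof.
  intros HM Ha.
  assert (Hself : sumR T (fun k => kept k * loss (S k) (played r k))
     = sumR T (fun k => charged k (k + d (S k)))
       + sumR T (fun k => charged k k - charged k (k + d (S k)))).
  { rewrite <- sumR_plus. apply sumR_ext; intros k Hk. rewrite charged_self; auto; lra. }
  assert (Hdrift : sumR T (fun k => charged k k - charged k (k + d (S k)))
     <= rate * sumR T (fun k => sumR T (fun j => if pending k j then cross k j else 0))).
  { rewrite <- sumR_scal. apply sumR_le; intros; apply drift; auto. }
  assert (Hcoef : sumR T (fun k => sumR T (fun j => pair_coef k j * cross k j))
     = sumR T (fun k => sumR T (fun j => if pending k j then cross k j else 0))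
       + / 2 * sumR T (fun k => sumR T (fun j => if same_arrival k j then cross k j else 0))).
  { rewrite <- sumR_scal, <- sumR_plus. apply sumR_ext; intros k _.
    rewrite <- sumR_scal, <- sumR_plus. apply sumR_ext; intros j _.
    unfold pair_coef. destruct (pending k j), (same_arrival k j); lra. }
  pose proof (potential_bound M HM a Ha). pose proof rate_pos. nra.
Qed.

(** ** Stability of the distribution over fewer than beta rounds *)

Definition stable_before t := forall t' s a, (t' < t)%nat -> (s <= t')%nat ->
  INR (t' - s) < beta -> (a < K)%nat -> qdist r t' a <= exp 1 * qdist r s a.

Lemma arrival_mass t u : stable_before t -> (u < t)%nat ->
  sumR K (fun b => qdist r u b * arrival r (S u) b) <= exp 1 * kept_arrivals_at u.
Proof.
  intros Hst Hu. rewrite (arrival_weighted_sum (fun b => qdist r u b) u).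
  unfold kept_arrivals_at. rewrite <- sumR_scal.
  apply sumR_le; intros k Hk. destruct (k + d (S k) =? u)%nat eqn:E; [|lra].
  apply Nat.eqb_eq in E. fold (charged k u). rewrite charged_formula; auto.
  destruct (hrec k Hk) as [HA HP].
  unfold kept. destruct (Rlt_dec (INR (d (S k))) beta) as [Hd|Hd]; [|lra].
  assert (Hr : qdist r u (played r k) <= exp 1 * qdist r k (played r k)).
  { apply Hst; try lia. replace (u - k)%nat with (d (S k)) by lia. auto. }
  rewrite <- HP in Hr. pose proof (played_prob_pos k Hk).
  destruct (hloss (S k) (played r k)) as [Hl1 Hl2]; auto; try lia.
  pose proof (qdist_pos r u (played r k)).
  apply Rmult_le_reg_r with (played_prob r k); auto. unfold Rdiv.
  rewrite Rmult_1_l, Rmult_assoc, Rinv_l by lra. nra.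
Qed.

Lemma potential_S_lower u c : sumR K (fun b => qdist r u b * arrival r (S u) b) <= c ->
  potential r u * (1 - rate * c) <= potential r (S u).
Proof.
  intros Hc. rewrite potential_S.
  apply Rmult_le_compat_l; [apply Rlt_le, potential_pos|].
  apply Rle_trans with (sumR K (fun b => qdist r u b * (1 - rate * arrival r (S u) b))).
  - rewrite (sumR_ext _ _ (fun b => qdist r u b + (- rate) * (qdist r u b * arrival r (S u) b)))
      by (intros; ring).
    rewrite sumR_plus, sumR_scal, qdist_sum. pose proof rate_pos. nra.
  - apply sumR_le; intros b _. apply Rmult_le_compat_l; [apply Rlt_le, qdist_pos|].
    pose proof (exp_ineq1_le (- rate * arrival r (S u) b)). lra.
Qed.

(* Fewer than 2 beta kept estimates arrive, each removing mass at most e, and the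
   learning rate is below 1/(4 e beta): the potential decays at most geometrically. *)
Lemma potential_decay s t : stable_before t -> (s <= t)%nat -> INR (t - s) < beta ->
  forall v, (s + v <= t)%nat ->
  potential r s * exp (- (2 * (rate * exp 1 * kept_arrivals s (s + v))))
  <= potential r (s + v).
Proof.
  intros Hst Hst' Hb. pose proof rate_pos. pose proof rate_beta. pose proof (exp_pos 1).
  assert (HNw : kept_arrivals s t < 2 * beta).
  { pose proof (kept_arrivals_bound s t Hst'). rewrite minus_INR in Hb; auto. lra. }
  induction v as [|v IH]; intros Hv.
  - rewrite Nat.add_0_r, kept_arrivals_refl, !Rmult_0_r, Ropp_0, exp_0; lra.
  - rewrite Nat.add_succ_r. set (u := (s + v)%nat) in *.
    rewrite kept_arrivals_S by lia.
    pose proof (potential_S_lower u _ (arrival_mass t u Hst ltac:(lia))) as HWS.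
    pose proof (kept_arrivals_at_nonneg u).
    assert (kept_arrivals_at u <= kept_arrivals s t) by (apply kept_arrivals_at_le; lia).
    assert (Hx : 0 <= rate * (exp 1 * kept_arrivals_at u) <= / 2).
    { split; [apply Rmult_le_pos; [lra|]; apply Rmult_le_pos; lra|].
      assert (rate * (exp 1 * (2 * beta)) <= / 2) by nra. nra. }
    pose proof (exp_neg_twice_le _ Hx). pose proof (IH ltac:(lia)).
    pose proof (potential_pos r s). pose proof (potential_pos r u).
    replace (- (2 * (rate * exp 1 * (kept_arrivals s u + kept_arrivals_at u)))) with
      (- (2 * (rate * exp 1 * kept_arrivals s u)) + - (2 * (rate * (exp 1 * kept_arrivals_at u))))
      by ring.
    rewrite exp_plus.
    pose proof (exp_pos (- (2 * (rate * exp 1 * kept_arrivals s u)))).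
    pose proof (exp_pos (- (2 * (rate * (exp 1 * kept_arrivals_at u))))).
    nra.
Qed.

Lemma potential_ratio s t : stable_before t -> (s <= t)%nat -> INR (t - s) < beta ->
  potential r s <= exp 1 * potential r t.
Proof.
  intros Hst Hst' Hb. pose proof rate_pos. pose proof rate_beta. pose proof (exp_pos 1).
  pose proof (potential_decay s t Hst Hst' Hb (t - s) ltac:(lia)) as Hdec.
  replace (s + (t - s))%nat with t in Hdec by lia.
  pose proof (kept_arrivals_bound s t Hst'). rewrite minus_INR in Hb; auto.
  pose proof (kept_arrivals_nonneg s t).
  assert (Hbig : / exp 1 <= exp (- (2 * (rate * exp 1 * kept_arrivals s t)))).
  { rewrite <- exp_Ropp. apply exp_le.
    assert (rate * exp 1 * (2 * beta) <= / 2) by nra. nra. }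
  pose proof (potential_pos r s). pose proof (potential_pos r t).
  apply Rmult_le_reg_l with (/ exp 1); [apply Rinv_0_lt_compat; auto|].
  rewrite <- Rmult_assoc, Rinv_l, Rmult_1_l by lra.
  apply Rle_trans with (exp (- (2 * (rate * exp 1 * kept_arrivals s t))) * potential r s);
    [apply Rmult_le_compat_r|]; lra.
Qed.

Lemma qdist_stable t : forall s a, (s <= t)%nat -> INR (t - s) < beta -> (a < K)%nat ->
  qdist r t a <= exp 1 * qdist r s a.
Proof.
  induction t as [t IH] using lt_wf_ind. intros s a Hst Hb Ha.
  assert (Hstab : stable_before t) by (intros t' s' a' Ht'; apply IH; auto).
  pose proof (potential_ratio s t Hstab Hst Hb) as HW.
  pose proof (cumL_mono s (t - s) a) as HL. replace (s + (t - s))%nat with t in HL by lia.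
  pose proof rate_pos. pose proof (potential_pos r s). pose proof (potential_pos r t).
  assert (Hexp : exp (- rate * cumL r t a) <= exp (- rate * cumL r s a)) by (apply exp_le; nra).
  pose proof (exp_pos (- rate * cumL r s a)).
  unfold qdist. set (A := exp (- rate * cumL r s a)) in *. apply Rle_trans with (A / potential r t).
  - apply Rmult_le_compat_r; [apply Rlt_le, Rinv_0_lt_compat|]; lra.
  - replace (A / potential r t) with (A / (potential r t * potential r s) * potential r s)
      by (field; lra).
    replace (exp 1 * (A / potential r s))
      with (A / (potential r t * potential r s) * (exp 1 * potential r t)) by (field; lra).
    apply Rmult_le_compat_l; auto. apply Rlt_le, Rdiv_lt_0_compat; nra.
Qed.

Lemma cross_diag k : (k < T)%nat -> cross k k <= exp 1 *
  (if Rlt_dec (INR (d (S k))) beta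
   then loss (S k) (played r k) * loss (S k) (played r k) / played_prob r k else 0).
Proof.
  intros Hk. destruct (hrec k Hk) as [HA HP]. unfold cross, est, est_of.
  rewrite (sumR_ext _ _ (fun b => if (played r k =? b)%nat then qdist r (k + d (S k)) b *
     (if Rlt_dec (INR (d (S k))) beta then loss (S k) b / played_prob r k else 0) *
     (if Rlt_dec (INR (d (S k))) beta then loss (S k) b / played_prob r k else 0) else 0)).
  2:{ intros b _. unfold played, played_prob.
      destruct (fst (nth k r (O, 1%R)) =? b)%nat eqn:E; [|lra].
      apply Nat.eqb_eq in E. subst. reflexivity. }
  rewrite sumR_single; auto.
  destruct (Rlt_dec _ _) as [Hd|Hd]; [|pose proof (exp_pos 1); lra].
  assert (Hr : qdist r (k + d (S k)) (played r k) <= exp 1 * qdist r k (played r k)).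
  { apply qdist_stable; auto; try lia. replace (k + d (S k) - k)%nat with (d (S k)) by lia. auto. }
  rewrite <- HP in Hr. pose proof (played_prob_pos k Hk).
  destruct (hloss (S k) (played r k) ltac:(lia) HA).
  set (q := qdist r (k + d (S k)) (played r k)) in *. set (P := played_prob r k) in *.
  set (l := loss (S k) (played r k)) in *.
  assert (Hq : q / P <= exp 1).
  { apply Rmult_le_reg_r with P; auto. unfold Rdiv. rewrite Rmult_assoc, Rinv_l; lra. }
  replace (q * (l / P) * (l / P)) with (q / P * (l * l / P)) by (field; lra).
  apply Rmult_le_compat_r; auto. apply Rmult_le_pos; [nra|].
  apply Rlt_le, Rinv_0_lt_compat; lra.
Qed.

End Pathwise.

(** * Expectations of the estimates *)

Lemma consistent_nil_record t : consistent nil t -> forall i, (i < length t)%nat ->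
  (played t i < K)%nat /\ played_prob t i = qdist t i (played t i).
Proof. intros Hv i Hi. exact (consistent_record t nil Hv i ltac:(simpl; lia)). Qed.

Lemma Ex_nth i f : (i < T)%nat ->
  Ex T (fun r => f (nth i r (O, 1))) nil
  = Ex i (fun r1 => sumR K (fun b => pr r1 b * f (b, pr r1 b))) nil.
Proof.
  intros Hi. replace T with (i + S (T - S i))%nat by lia. rewrite Ex_split.
  apply Ex_ext. intros t Ht. simpl app.
  transitivity (Ex (S (T - S i)) (fun r => f (nth (length t) r (O, 1)) * (fun _ => 1) r) t).
  { apply Ex_ext; intros u _. rewrite Ht. lra. }
  rewrite Ex_step with (z := (O, 1)); [rewrite Ex_const; lra|].
  intros; rewrite !Ex_const; auto.
Qed.

Lemma mean_est_of r i a : (a < K)%nat ->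
  sumR K (fun b => pr r b * est_of i a (b, pr r b)) = kept i * loss (S i) a.
Proof.
  intros Ha. unfold est_of. cbn [fst snd].
  rewrite (sumR_ext _ _ (fun b => if (a =? b)%nat then pr r b *
     (if Rlt_dec (INR (d (S i))) beta then loss (S i) b / pr r b else 0) else 0)).
  - rewrite sumR_single; auto. unfold kept. destruct (Rlt_dec _ _); [|lra].
    field. apply Rgt_not_eq, pr_pos.
  - intros b _. destruct (Nat.eq_dec a b) as [->|Hne]; [rewrite Nat.eqb_refl; auto|].
    rewrite (proj2 (Nat.eqb_neq a b) Hne), (proj2 (Nat.eqb_neq b a)) by auto. ring.
Qed.

Lemma mean_est_of_bounds r i b : (b < K)%nat ->
  0 <= sumR K (fun c => pr r c * est_of i b (c, pr r c)) <= kept i.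
Proof.
  intros Hb. rewrite mean_est_of; auto. destruct (hloss (S i) b ltac:(lia) Hb).
  pose proof (kept_01 i). split; nra.
Qed.

Lemma Ex_est i a : (i < T)%nat -> (a < K)%nat ->
  Ex T (fun r => est r i a) nil = kept i * loss (S i) a.
Proof.
  intros Hi Ha. unfold est. rewrite Ex_nth; auto.
  rewrite (Ex_ext i nil _ (fun _ => kept i * loss (S i) a)); [apply Ex_const|].
  intros t _; apply mean_est_of; auto.
Qed.

Definition diag_term k (x : nat * R) :=
  if Rlt_dec (INR (d (S k))) beta then loss (S k) (fst x) * loss (S k) (fst x) / snd x else 0.

(* Its expectation is at most K: sum_b p(b) l(b)^2 / p(b) <= K. *)
Lemma Ex_diag_term k : (k < T)%nat ->
  Ex T (fun r => diag_term k (nth k r (O, 1))) nil <= INR K * kept k.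
Proof.
  intros Hk. rewrite Ex_nth; auto. rewrite <- (Ex_const k nil (INR K * kept k)).
  apply Ex_mono; intros t _ _. simpl app. unfold diag_term, kept; cbn [fst snd].
  destruct (Rlt_dec _ _).
  - rewrite Rmult_1_r, <- (Rmult_1_r (INR K)), <- sumR_const. apply sumR_le; intros b Hb.
    pose proof (pr_pos t b). destruct (hloss (S k) b ltac:(lia) Hb).
    replace (pr t b * (loss (S k) b * loss (S k) b / pr t b))
      with (loss (S k) b * loss (S k) b) by (field; lra).
    nra.
  - rewrite (sumR_ext _ _ (fun _ => 0)) by (intros; ring). rewrite sumR_zero; lra.
Qed.

(* Expectation of a product of functions of the records of rounds j1 + 1 < j2 + 1 and
   of a factor G which is determined by the first L0 rounds and does not depend on
   either record: the two records can be integrated out successively. *)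
Lemma Ex_nth2 j1 j2 L0 (f1 f2 : nat * R -> R) G z :
  (j1 < j2)%nat -> (j2 < L0)%nat -> (L0 <= T)%nat ->
  (L0 <= S j1 + d (S j1))%nat -> (L0 <= S j2 + d (S j2))%nat ->
  (forall s1 s2, agree_except j1 s1 s2 -> G s1 = G s2) ->
  (forall s1 s2, agree_except j2 s1 s2 -> G s1 = G s2) ->
  (forall r t, length r = L0 -> length t = (T - L0)%nat -> G (r ++ t) = G r) ->
  Ex T (fun r => f1 (nth j1 r (O, 1)) * (f2 (nth j2 r (O, 1)) * G r)) nil =
  Ex j1 (fun r1 => sumR K (fun b => pr r1 b * f1 (b, pr r1 b)) *
    Ex (j2 - S j1) (fun r2 => sumR K (fun b => pr r2 b * f2 (b, pr r2 b)) *
      Ex (L0 - S j2) G (r2 ++ z :: nil)) (r1 ++ z :: nil)) nil.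
Proof.
  intros H12 H2L HLT HL1 HL2 HG1 HG2 HGp.
  set (F := fun r => f1 (nth j1 r (O, 1)) * (f2 (nth j2 r (O, 1)) * G r)).
  replace T with (L0 + (T - L0))%nat at 1 by lia.
  rewrite Ex_split, (Ex_ext L0 nil _ F).
  2:{ intros t Ht. simpl app. apply Ex_prefix. intros u Hu. unfold F.
      rewrite !app_nth1 by lia. rewrite HGp; auto. }
  replace L0 with (j1 + S (L0 - S j1))%nat at 1 by lia.
  rewrite Ex_split. apply Ex_ext. intros t Ht. simpl app.
  etransitivity.
  { apply (Ex_step_agree j1 (L0 - S j1) t f1 (fun r => f2 (nth j2 r (O, 1)) * G r) z);
      auto; [|lia].
    intros s1 s2 [Hl Hn]. rewrite Hn by lia.
    f_equal. apply HG1. split; auto. }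
  f_equal.
  replace (L0 - S j1)%nat with ((j2 - S j1) + S (L0 - S j2))%nat by lia.
  rewrite Ex_split. apply Ex_ext. intros u Hu.
  apply (Ex_step_agree j2 (L0 - S j2) _ f2 G z); auto; [|lia].
  rewrite !length_app; simpl; lia.
Qed.

Lemma Ex_sum_one n r (F : nat -> history -> R) :
  (forall x, sumR K (fun b => F b x) = 1) -> sumR K (fun b => Ex n (F b) r) = 1.
Proof.
  intros H. rewrite <- (Ex_sum n r K F).
  rewrite (Ex_ext _ _ _ (fun _ => 1)); [apply Ex_const|intros; apply H].
Qed.

(* Two distinct kept estimates, both still pending at round c + 1, weighted by q_c:
   they are integrated out independently, leaving a probability. *)
Lemma Ex_est_pair j1 j2 c b : (b < K)%nat -> (j1 < j2)%nat -> (j2 <= c)%nat -> (j2 < T)%nat ->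
  (c < S j1 + d (S j1))%nat -> (c < S j2 + d (S j2))%nat ->
  Ex T (fun r => est r j1 b * (est r j2 b * qdist r c b)) nil <=
  kept j1 * kept j2 * Ex j1 (fun r1 => Ex (j2 - S j1) (fun r2 =>
     Ex (Nat.min (S c) T - S j2) (fun r => qdist r c b) (r2 ++ (O, 1) :: nil))
     (r1 ++ (O, 1) :: nil)) nil.
Proof.
  intros Hb H12 H2c H2T Hc1 Hc2. unfold est.
  rewrite (Ex_nth2 j1 j2 (Nat.min (S c) T) _ _ _ (O, 1)); try lia.
  - assert (Htail : forall r2, 0 <= Ex (Nat.min (S c) T - S j2) (fun r => qdist r c b)
                                        (r2 ++ (O, 1) :: nil))
      by (intros; apply Ex_nonneg; intros; apply Rlt_le, qdist_pos).
    pose proof (kept_01 j1).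
    rewrite <- Ex_scal. apply Ex_mono; intros t _ _. rewrite Rmult_assoc.
    apply Rmult_le_compat; [apply (mean_est_of_bounds _ j1 b Hb)| |
                            apply (mean_est_of_bounds _ j1 b Hb)|].
    + apply Ex_nonneg; intros x.
      apply Rmult_le_pos; [apply (mean_est_of_bounds x j2 b Hb)|apply Htail].
    + rewrite <- Ex_scal. apply Ex_mono; intros u _ _.
      apply Rmult_le_compat_r; [apply Htail|apply (mean_est_of_bounds _ j2 b Hb)].
  - intros s1 s2 HR. apply (qdist_agree j1); auto.
  - intros s1 s2 HR. apply (qdist_agree j2); auto.
  - intros r t Hr Ht. destruct (Nat.le_gt_cases (S c) T).
    + apply qdist_app. lia.
    + rewrite Nat.min_r, Nat.sub_diag in Ht by lia.
      destruct t; [rewrite app_nil_r; auto|simpl in Ht; lia].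
Qed.

Lemma Ex_cross_offdiag k j : (k < T)%nat -> (j < T)%nat -> k <> j ->
  (k <= j + d (S j))%nat -> (j + d (S j) < S k + d (S k))%nat ->
  Ex T (fun r => cross r k j) nil <= kept k * kept j.
Proof.
  intros Hk Hj Hkj H1 H2. unfold cross. rewrite Ex_sum.
  set (c := (j + d (S j))%nat) in *.
  assert (Hprob : forall j1 j2, sumR K (fun b => Ex j1 (fun r1 => Ex (j2 - S j1) (fun r2 =>
     Ex (Nat.min (S c) T - S j2) (fun r => qdist r c b) (r2 ++ (O, 1) :: nil))
     (r1 ++ (O, 1) :: nil)) nil) = 1).
  { intros j1 j2. apply Ex_sum_one. intros x. apply Ex_sum_one. intros y.
    apply Ex_sum_one. intros; apply qdist_sum. }
  destruct (Nat.lt_total k j) as [Hlt|[Heq|Hlt]]; [| lia |].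
  - eapply Rle_trans.
    + apply sumR_le. intros b Hb.
      rewrite (Ex_ext T nil _ (fun r => est r k b * (est r j b * qdist r c b)))
        by (intros; cbv beta; ring).
      apply (Ex_est_pair k j c b); auto; unfold c; lia.
    + rewrite sumR_scal, Hprob. lra.
  - eapply Rle_trans.
    + apply sumR_le. intros b Hb.
      rewrite (Ex_ext T nil _ (fun r => est r j b * (est r k b * qdist r c b)))
        by (intros; cbv beta; ring).
      apply (Ex_est_pair j k c b); auto; unfold c in *; lia.
    + rewrite sumR_scal, Hprob. lra.
Qed.

Lemma Ex_cross_nonneg k j : (k < T)%nat -> (j < T)%nat -> 0 <= Ex T (fun r => cross r k j) nil.
Proof.
  intros Hk Hj. unfold cross. rewrite Ex_sum. apply sumR_nonneg; intros b Hb.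
  rewrite <- (Ex_const T nil 0). apply Ex_mono; intros t Ht Hv. simpl app.
  assert (hrec : forall i, (i < T)%nat ->
    (played t i < K)%nat /\ played_prob t i = qdist t i (played t i))
    by (intros; apply consistent_nil_record; auto; lia).
  pose proof (est_nonneg t Ht hrec k b Hk). pose proof (est_nonneg t Ht hrec j b Hj).
  pose proof (qdist_pos t (j + d (S j)) b).
  apply Rmult_le_pos; [apply Rmult_le_pos|]; lra.
Qed.

(** * Summing the second-order terms *)

Lemma pair_coef_diag k : pair_coef k k = / 2.
Proof.
  unfold pair_coef, pending, same_arrival.
  rewrite Nat.eqb_refl, (proj2 (Nat.ltb_ge _ _) (le_n _)), andb_false_r. lra.
Qed.

Definition offdiag_weight k j :=
  if (k =? j)%nat then 0 else pair_coef k j * (kept k * kept j).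

Definition window_weight k j :=
  kept k * (if ((k <? j) && (j <=? k + d (S k)))%nat%bool then 1 else 0).

(* If the windows of two distinct rounds overlap, the later round was played inside
   the delay window of the earlier one. *)
Lemma offdiag_window k j :
  offdiag_weight k j + offdiag_weight j k <= window_weight k j + window_weight j k.
Proof.
  unfold offdiag_weight, window_weight, pair_coef, pending, same_arrival, kept.
  destruct (Rlt_dec (INR (d (S k))) beta), (Rlt_dec (INR (d (S j))) beta);
  repeat match goal with |- context [if ?b then _ else _] =>
    match b with
    | Rlt_dec _ _ => fail 1
    | _ => destruct b eqn:?
    end end; bool2prop; try lra; exfalso; lia.
Qed.

(* Each kept round k + 1 has at most d_{k+1} rounds in its window. *)
Lemma offdiag_total : sumR T (fun k => sumR T (fun j => offdiag_weight k j)) <= D_beta T d beta.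
Proof.
  assert (Hsym : forall f : nat -> nat -> R, sumR T (fun k => sumR T (fun j => f k j))
     = / 2 * (sumR T (fun k => sumR T (fun j => f k j + f j k)))).
  { intros f. rewrite (sumR_ext T (fun k => sumR T (fun j => f k j + f j k))
                         (fun k => sumR T (fun j => f k j) + sumR T (fun j => f j k)))
      by (intros; apply sumR_plus).
    rewrite sumR_plus, (sumR_swap T T (fun k j => f j k)). lra. }
  apply Rle_trans with (sumR T (fun k => sumR T (fun j => window_weight k j))).
  - rewrite (Hsym offdiag_weight), (Hsym window_weight).
    apply Rmult_le_compat_l; [lra|].
    apply sumR_le; intros k _. apply sumR_le; intros j _. apply offdiag_window.
  - unfold D_beta. apply sumR_le; intros k _. unfold window_weight. rewrite sumR_scal.
    pose proof (count_window T k (d (S k))).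
    unfold kept. destruct (Rlt_dec _ _); lra.
Qed.

Lemma Ex_pair_term k j : (k < T)%nat -> (j < T)%nat ->
  pair_coef k j * Ex T (fun r => cross r k j) nil <=
  (if (k =? j)%nat then / 2 * (exp 1 * (INR K * kept k)) else 0) + offdiag_weight k j.
Proof.
  intros Hk Hj. unfold offdiag_weight. destruct (Nat.eq_dec k j) as [<-|Hkj].
  - rewrite Nat.eqb_refl, Rplus_0_r, pair_coef_diag. apply Rmult_le_compat_l; [lra|].
    eapply Rle_trans.
    + apply (Ex_mono T nil _ (fun r => exp 1 * diag_term k (nth k r (O, 1)))).
      intros t Ht Hv. simpl app. apply cross_diag; auto.
      intros; apply consistent_nil_record; auto; lia.
    + rewrite Ex_scal. apply Rmult_le_compat_l; [apply Rlt_le, exp_pos|].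
      apply Ex_diag_term; auto.
  - rewrite (proj2 (Nat.eqb_neq k j) Hkj), Rplus_0_l.
    pose proof (Ex_cross_nonneg k j Hk Hj). pose proof (kept_01 k). pose proof (kept_01 j).
    unfold pair_coef, pending, same_arrival.
    destruct ((k <=? j + d (S j)) && (j + d (S j) <? k + d (S k)))%nat%bool eqn:E1,
      (k + d (S k) =? j + d (S j))%nat eqn:E2; bool2prop; try lra;
    pose proof (Ex_cross_offdiag k j Hk Hj Hkj ltac:(lia) ltac:(lia)); nra.
Qed.

Lemma Ex_second_order :
  Ex T (fun r => sumR T (fun k => sumR T (fun j => pair_coef k j * cross r k j))) nil
  <= INR K * INR T * exp 1 / 2 + D_beta T d beta.
Proof.
  rewrite Ex_sum. eapply Rle_trans.
  - apply sumR_le; intros k Hk. rewrite Ex_sum. apply sumR_le; intros j Hj.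
    rewrite Ex_scal. apply Ex_pair_term; auto.
  - rewrite (sumR_ext T _ (fun k => / 2 * (exp 1 * (INR K * kept k))
                                     + sumR T (fun j => offdiag_weight k j))).
    2:{ intros k Hk. rewrite sumR_plus. f_equal.
        transitivity (sumR T (fun j => if (k =? j)%nat
                                       then / 2 * (exp 1 * (INR K * kept j)) else 0));
          [|apply sumR_single; auto].
        apply sumR_ext; intros j _. destruct (k =? j)%nat eqn:E; bool2prop; subst; auto. }
    rewrite sumR_plus. pose proof offdiag_total.
    assert (sumR T (fun k => / 2 * (exp 1 * (INR K * kept k))) <= INR T * (/ 2 * (exp 1 * INR K))).
    { rewrite <- sumR_const. apply sumR_le; intros k _.
      pose proof (kept_01 k). pose proof (exp_pos 1). pose proof (pos_INR K).
      assert (0 <= exp 1 * INR K) by nra. nra. }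
    lra.
Qed.

Lemma Ex_cumL M a : (forall k, (k < T)%nat -> (k + d (S k) < M)%nat) -> (a < K)%nat ->
  Ex T (fun r => cumL r M a) nil <= sumR T (fun k => loss (S k) a).
Proof.
  intros HM Ha.
  rewrite (Ex_ext T nil _ (fun r => sumR T (fun i => est r i a))).
  - rewrite Ex_sum. apply sumR_le; intros i Hi. rewrite Ex_est; auto.
    destruct (hloss (S i) a ltac:(lia) Ha). pose proof (kept_01 i). nra.
  - intros t Ht. simpl app. unfold cumL. rewrite Ht. apply sumR_ext; intros i Hi.
    rewrite (proj2 (Nat.leb_le _ M)); auto. specialize (HM i Hi); lia.
Qed.

Lemma skipped_loss t : (forall k, (k < T)%nat -> (played t k < K)%nat) ->
  sumR T (fun k => loss (S k) (played t k))
  <= card_S T d beta + sumR T (fun k => kept k * loss (S k) (played t k)).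
Proof.
  intros HA. unfold card_S. rewrite <- sumR_plus. apply sumR_le; intros k Hk.
  destruct (hloss (S k) (played t k) ltac:(lia) (HA k Hk)).
  unfold kept. destruct (Rlt_dec _ _), (Rle_dec _ _); lra.
Qed.

Fixpoint max_delay n := match n with O => O | S n' => Nat.max (max_delay n') (d (S n')) end.

Lemma max_delay_spec n i : (i < n)%nat -> (d (S i) <= max_delay n)%nat.
Proof.
  induction n as [|n IH]; intros H; simpl; [lia|].
  destruct (Nat.eq_dec i n) as [->|Hne]; [lia|]. specialize (IH ltac:(lia)); lia.
Qed.

Lemma main_bound a : (a < K)%nat ->
  exp_loss K loss d eta beta T nil
  <= card_S T d beta + ln (INR K) / rate + sumR T (fun k => loss (S k) a)
     + rate * (INR K * INR T * exp 1 / 2 + D_beta T d beta).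
Proof.
  intros Ha. set (M := (T + max_delay T)%nat).
  assert (HM : forall k, (k < T)%nat -> (k + d (S k) < M)%nat)
    by (intros k Hk; pose proof (max_delay_spec T k Hk); unfold M; lia).
  rewrite exp_loss_Ex. eapply Rle_trans.
  { apply (Ex_mono T nil _ (fun r =>
      (card_S T d beta + ln (INR K) / rate + cumL r M a)
      + rate * sumR T (fun k => sumR T (fun j => pair_coef k j * cross r k j)))).
    intros t Ht Hv. simpl app. cbn [length Nat.add].
    assert (hrec : forall i, (i < T)%nat ->
      (played t i < K)%nat /\ played_prob t i = qdist t i (played t i))
      by (intros; apply consistent_nil_record; auto; lia).
    pose proof (pathwise_bound t Ht hrec M a HM Ha).
    pose proof (skipped_loss t (fun k Hk => proj1 (hrec k Hk))).
    lra. }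
  rewrite Ex_plus, Ex_plus, Ex_const, Ex_scal.
  pose proof (Ex_cumL M a HM Ha). pose proof Ex_second_order. pose proof rate_pos.
  nra.
Qed.

End SkipperDEW.

Lemma minR_attain n f : exists a, (a <= n)%nat /\ minR n f = f a.
Proof.
  induction n as [|n [a [Ha Hm]]]; simpl; [exists O; split; auto|].
  unfold Rmin. destruct (Rle_dec (minR n f) (f (S n))).
  - exists a; split; auto.
  - exists (S n); split; auto.
Qed.

Lemma div_eta' x eta beta : x / eta' eta beta <= Rmax (x / eta) (4 * exp 1 * beta * x).
Proof.
  unfold eta', Rmin. destruct (Rle_dec eta (/ (4 * exp 1 * beta))); [apply Rmax_l|].
  eapply Rle_trans; [|apply Rmax_r]. right. unfold Rdiv. rewrite Rinv_inv. ring.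
Qed.

(* Needed to compare the second-order term at rho and at eta >= rho. *)
Lemma D_beta_nonneg T d beta : 0 <= D_beta T d beta.
Proof. apply sumR_nonneg; intros. destruct (Rlt_dec _ _); [apply pos_INR|lra]. Qed.

Theorem theorem3 (K T : nat) (loss : nat -> nat -> R) (d : nat -> nat)
  (eta beta : R)
  (hK : (2 <= K)%nat) (hT : (1 <= T)%nat)
  (hloss : forall t a, (1 <= t)%nat -> (a < K)%nat -> 0 <= loss t a <= 1)
  (heta : 0 < eta) (hbeta : 0 < beta) :
  skipper_dew_regret K T loss d eta beta
  <= card_S T d beta
     + Rmax (ln (INR K) / eta) (4 * exp 1 * beta * ln (INR K))
     + eta * (INR K * INR T * exp 1 / 2 + D_beta T d beta).
Proof.
  destruct (minR_attain (K - 1) (fun a => sumR T (fun i => loss (S i) a))) as [a [Ha Hm]].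
  pose proof (main_bound K T loss d eta beta hK hloss heta hbeta a ltac:(lia)) as Hbound.
  unfold skipper_dew_regret. rewrite Hm.
  pose proof (div_eta' (ln (INR K)) eta beta).
  assert (Hsecond : 0 <= INR K * INR T * exp 1 / 2 + D_beta T d beta).
  { pose proof (D_beta_nonneg T d beta). pose proof (pos_INR K). pose proof (pos_INR T).
    pose proof (exp_pos 1). assert (0 <= INR K * INR T) by nra. nra. }
  pose proof (Rmult_le_compat_r _ _ _ Hsecond (rate_le_eta eta beta)).
  unfold rate in *. lra.
Qed.
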